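(* If $n$ is a positive integer, then $$\sum_{k = 1}^n \sum_{j = 0}^{k - 1} \frac{( - 1)^{n - j} ( n - j)!}{( n - j + 1)( k - j)}\left\{ {n \atop n - j} \right\} = - \frac{n}{2}B_{n - 1} .$$
   Context: $\left\{ {n \atop m} \right\}$ denotes the Stirling number of the second kind. $B_n$ are the Bernoulli numbers, defined by $\frac{t}{e^t-1}=\sum_{n\ge0}B_n\frac{t^n}{n!}$ (so $B_0=1$, $B_1=-1/2$). *)

From mathcomp Require Import all_boot all_order all_algebra.
Set Implicit Arguments. Unset Strict Implicit. Unset Printing Implicit Defensive.
Import Order.TTheory GRing.Theory Num.Theory.
Local Open Scope ring_scope.

Fixpoint stirling2 (n k : nat) : nat :=
  match n, k with
  | 0, 0 => 1
  | 0, _.+1 => 0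
  | _.+1, 0 => 0
  | n'.+1, k'.+1 => (k'.+1 * stirling2 n' k'.+1 + stirling2 n' k')%N
  end.

(* Bernoulli numbers with B_1 = -1/2, i.e. t/(e^t-1) = sum B_n t^n/n!.
   Coefficient comparison in t = (e^t - 1) * sum B_n t^n/n! gives
   B_0 = 1 and  sum_{k=0}^{m} C(m+1,k) B_k = 0 for m >= 1. *)
Fixpoint bernoulli_list (m : nat) : seq rat :=
  match m with
  | 0 => [:: 1]
  | m'.+1 =>
      let s := bernoulli_list m' in
      rcons s (- (\sum_(k < m'.+2 | (k < m'.+1)%N) ('C(m'.+2, k))%:R * nth 0 s k)
                 / (m'.+2)%:R)
  end.

Definition bernoulli (n : nat) : rat := nth 0 (bernoulli_list n) n.

From mathcomp Require Import all_boot all_order all_algebra.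
From mathcomp Require Import ring.

(* Write S_n c = sum_m (-1)^m m! {n, m} c_m.  The recurrence of the Stirling
   numbers says S_(n+1) c = S_n (wdiff c) for the weighted difference
   (wdiff c)_m = m c_m - (m+1) c_(m+1).  This operator nearly commutes with the
   backward difference bdiff and with the convolution
   (hconv c)_m = sum_(i<m) c_i / (m-i), which gives
   S_n (bdiff c) = sum_k C(n,k) S_k c  and  S_n (hconv c) = - n S_(n-1) c.
   For c_m = 1/(m+1) the first identity is the defining recurrence of the
   Bernoulli numbers, so B_n = S_n c.  After exchanging the two sums, the
   left-hand side is S_n (H_m / (m+1)), and H_m / (m+1) = (hconv c)_m / 2 by
   partial fractions, whence the value - n/2 S_(n-1) c = - n/2 B_(n-1). *)

Set Implicit Arguments.
Unset Strict Implicit.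
Unset Printing Implicit Defensive.

Import Order.TTheory GRing.Theory Num.Theory.
Local Open Scope ring_scope.

Lemma stirling2_small n m : (n < m)%N -> stirling2 n m = 0%N.
Proof.
by elim: n m => [|n IHn] [|m] //= ltnm; rewrite !IHn ?muln0 // ltnW.
Qed.

Lemma stirling2n0 n : stirling2 n 0 = (n == 0)%N.
Proof. by case: n. Qed.

Lemma sum_binomialS (R : pzSemiRingType) n (a : nat -> R) :
  \sum_(k < n.+2) 'C(n.+1, k)%:R * a k
  = \sum_(k < n.+1) 'C(n, k)%:R * (a k + a k.+1).
Proof.
under [RHS]eq_bigr do rewrite mulrDr.
rewrite big_split /= big_ord_recl [X in _ = X + _]big_ord_recl /= !bin0 -addrA.
congr (_ + _).
under eq_bigr do rewrite /bump /= add1n binS natrD mulrDl.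
rewrite big_split /= big_ord_recr /= bin_small // mul0r addr0 addrC.
by congr (_ + _); apply: eq_bigr => k _; rewrite /bump /= add1n.
Qed.

Lemma sum_triangle (R : nmodType) N (F : nat -> nat -> R) :
  \sum_(1 <= k < N.+1) \sum_(0 <= j < k) F j k
  = \sum_(0 <= j < N) \sum_(j.+1 <= k < N.+1) F j k.
Proof.
transitivity (\sum_(1 <= k < N.+1) \sum_(0 <= j < N | (j < k)%N) F j k).
  apply: eq_big_nat => k /andP [_ le_k_N].
  by rewrite (big_nat_widen 0 k N).
rewrite (exchange_big_dep_nat xpredT) //=.
apply: eq_big_nat => j /andP [_ lt_j_N].
by rewrite [RHS](big_nat_widenl j.+1 1).
Qed.

Section StirlingTransform.
Variable R : comPzRingType.
Implicit Types (c : nat -> R) (n m : nat).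

Definition stirling_coef n m : R := (-1) ^+ m * m`!%:R * (stirling2 n m)%:R.

Definition stirling_transform n c : R := \sum_(m < n.+1) stirling_coef n m * c m.

Definition wdiff c m : R := m%:R * c m - m.+1%:R * c m.+1.

Definition bdiff c m : R := c m - (if m is m'.+1 then c m' else 0).

Lemma stirling_coef_small n m : (n < m)%N -> stirling_coef n m = 0.
Proof. by move=> ltnm; rewrite /stirling_coef stirling2_small // mulr0. Qed.

Lemma stirling_coefS0 n : stirling_coef n.+1 0 = 0.
Proof. by rewrite /stirling_coef mulr0. Qed.

Lemma stirling_coefSS n m :
  stirling_coef n.+1 m.+1 = m.+1%:R * (stirling_coef n m.+1 - stirling_coef n m).
Proof.
rewrite /stirling_coef /= natrD natrM factS natrM exprS; ring.
Qed.

Lemma eq_stirling_transform n c1 c2 :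
  c1 =1 c2 -> stirling_transform n c1 = stirling_transform n c2.
Proof. by move=> eq_c; apply: eq_bigr => m _; rewrite eq_c. Qed.

Lemma stirling_transformD n c1 c2 :
  stirling_transform n (fun m => c1 m + c2 m)
  = stirling_transform n c1 + stirling_transform n c2.
Proof. by rewrite -big_split; apply: eq_bigr => m _; rewrite mulrDr. Qed.

Lemma stirling_transformB n c1 c2 :
  stirling_transform n (fun m => c1 m - c2 m)
  = stirling_transform n c1 - stirling_transform n c2.
Proof. by rewrite -sumrB; apply: eq_bigr => m _; rewrite mulrBr. Qed.

Lemma stirling_transformZ n a c :
  stirling_transform n (fun m => a * c m) = a * stirling_transform n c.
Proof. by rewrite mulr_sumr; apply: eq_bigr => m _; rewrite mulrCA. Qed.

Lemma stirling_transformS n c :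
  stirling_transform n.+1 c = stirling_transform n (wdiff c).
Proof.
rewrite /stirling_transform big_ord_recl stirling_coefS0 mul0r add0r.
under eq_bigr => m _ do rewrite lift0 stirling_coefSS mulrBr mulrBl.
under [RHS]eq_bigr do rewrite mulrBr.
rewrite !sumrB; congr (_ - _); last first.
  by apply: eq_bigr => m _; rewrite -mulrA mulrCA.
rewrite big_ord_recr /= stirling_coef_small // mulr0 mul0r addr0.
rewrite [RHS]big_ord_recl /= mul0r mulr0 add0r.
by apply: eq_bigr => m _; rewrite -mulrA mulrCA.
Qed.

Lemma stirling_transform_indicator0 n :
  stirling_transform n (fun m => (m == 0)%N%:R) = (n == 0)%N%:R.
Proof.
rewrite /stirling_transform big_ord_recl big1 => [|m _]; last by rewrite mulr0.
by rewrite addr0 mulr1 /stirling_coef stirling2n0 !mul1r.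
Qed.

Lemma wdiff_bdiff c : wdiff (bdiff c) =1 fun m => bdiff c m + bdiff (wdiff c) m.
Proof. by case=> [|m]; rewrite /wdiff /bdiff /=; ring. Qed.

Lemma stirling_transform_bdiff n c :
  stirling_transform n (bdiff c) = \sum_(k < n.+1) 'C(n, k)%:R * stirling_transform k c.
Proof.
elim: n c => [|n IHn] c.
  by rewrite /stirling_transform !big_ord1 /bdiff /stirling_coef !mul1r subr0.
rewrite stirling_transformS (eq_stirling_transform _ (wdiff_bdiff c)).
rewrite stirling_transformD !IHn (sum_binomialS _ (stirling_transform^~ c)) -big_split /=.
by apply: eq_bigr => k _; rewrite stirling_transformS mulrDr.
Qed.

End StirlingTransform.

Section HarmonicConvolution.
Variable R : numFieldType.
Implicit Types (c : nat -> R) (n m : nat).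

Definition hconv c m : R := \sum_(i < m) c i / (m - i)%:R.

Definition inv_succ m : R := m.+1%:R^-1.

Definition harmonic m : R := \sum_(i < m) inv_succ i.

Lemma hconvB c1 c2 m :
  hconv (fun i => c1 i - c2 i) m = hconv c1 m - hconv c2 m.
Proof. by rewrite -sumrB; apply: eq_bigr => i _; rewrite mulrBl. Qed.

Lemma mulr_hconv c m :
  m%:R * hconv c m = \sum_(i < m) c i + hconv (fun i => i%:R * c i) m.
Proof.
rewrite mulr_sumr -big_split; apply: eq_bigr => i _ /=.
have i_le_m := ltnW (ltn_ord i).
have : (m - i)%:R != 0 :> R by rewrite pnatr_eq0 subn_eq0 -ltnNge.
rewrite -[in m%:R](subnK i_le_m) natrD.
by move: (m - i)%:R => d nz_d; field.
Qed.

Lemma hconv_shift c m :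
  hconv (fun i => i%:R * c i) m.+1 = hconv (fun i => i.+1%:R * c i.+1) m.
Proof.
rewrite /hconv big_ord_recl !mul0r add0r.
by apply: eq_bigr => i _; rewrite lift0 subSS.
Qed.

Lemma wdiff_hconv c : wdiff (hconv c) =1 fun m => hconv (wdiff c) m - c m.
Proof.
move=> m; rewrite /wdiff !mulr_hconv big_ord_recr /= hconv_shift.
rewrite (hconvB (fun i => i%:R * c i) (fun i => i.+1%:R * c i.+1)).
ring.
Qed.

Lemma stirling_transform_hconv n c :
  stirling_transform n (hconv c) = - (n%:R * stirling_transform n.-1 c).
Proof.
elim: n c => [|n IHn] c.
  by rewrite /stirling_transform big_ord1 /hconv big_ord0 mulr0 mul0r oppr0.
rewrite stirling_transformS (eq_stirling_transform _ (wdiff_hconv c)).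
rewrite stirling_transformB IHn.
case: n {IHn} => [|n] /=; first by rewrite !mul1r mul0r oppr0 sub0r.
by rewrite -stirling_transformS -[n.+2]addn1 natrD mulrDl mul1r opprD.
Qed.

Lemma hconv_inv_succ m : hconv inv_succ m = 2 * harmonic m / m.+1%:R.
Proof.
have partial_fractions i : (i < m)%N ->
    inv_succ i / (m - i)%:R = (inv_succ i + (m - i)%:R^-1) / m.+1%:R.
  move=> lt_i_m.
  have nz_i : i.+1%:R != 0 :> R by rewrite pnatr_eq0.
  have nz_mi : (m - i)%:R != 0 :> R by rewrite pnatr_eq0 subn_eq0 -ltnNge.
  have -> : m.+1%:R = i.+1%:R + (m - i)%:R :> R.
    by rewrite -natrD addSn subnKC // ltnW.
  have nz_m : i.+1%:R + (m - i)%:R != 0 :> R by rewrite -natrD pnatr_eq0.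
  rewrite /inv_succ; move: i.+1%:R (m - i)%:R nz_i nz_mi nz_m => a b nz_a nz_b nz_ab.
  by field; rewrite nz_a nz_b nz_ab.
rewrite /hconv (eq_bigr _ (fun (i : 'I_m) _ => partial_fractions i (ltn_ord i))).
rewrite -mulr_suml big_split /= [X in _ + X](reindex_inj rev_ord_inj) /=.
under [X in _ + X]eq_bigr => i _ do rewrite subKn //.
by rewrite mulr_natl mulr2n.
Qed.

Lemma harmonic_subn n j : (j <= n)%N ->
  harmonic (n - j) = \sum_(j.+1 <= k < n.+1) (k - j)%:R^-1.
Proof.
move=> le_j_n; rewrite -[j.+1]add1n big_addn subSn // big_add1 big_mkord.
by apply: eq_bigr => i _; rewrite addnK.
Qed.

Lemma bdiff_inv_succ :
  bdiff inv_succ =1 fun m => inv_succ m - hconv (fun i => (i == 0)%N%:R) m.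
Proof.
case=> [|m]; rewrite /bdiff /hconv; first by rewrite big_ord0 !subr0.
by rewrite big_ord_recl big1 => [|i _]; rewrite ?mul0r // addr0 mul1r subn0.
Qed.

Lemma sum_binomial_stirling_inv_succ n :
  \sum_(k < n.+1) 'C(n, k)%:R * stirling_transform k inv_succ
  = stirling_transform n inv_succ + (n == 1)%N%:R.
Proof.
rewrite -stirling_transform_bdiff (eq_stirling_transform _ bdiff_inv_succ).
rewrite stirling_transformB stirling_transform_hconv opprK.
rewrite stirling_transform_indicator0.
by case: n => [|[|n]]; rewrite ?mul0r ?mulr1 ?mulr0 ?addr0.
Qed.

Lemma stirling_transform_harmonic n :
  stirling_transform n (fun m => harmonic m / m.+1%:R)
  = - (n%:R / 2) * stirling_transform n.-1 inv_succ.
Proof.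
have half_hconv : (fun m => harmonic m / m.+1%:R) =1 fun m => 2^-1 * hconv inv_succ m.
  by move=> m; rewrite hconv_inv_succ mulrA mulKf ?pnatr_eq0.
rewrite (eq_stirling_transform _ half_hconv) stirling_transformZ.
by rewrite stirling_transform_hconv mulrN mulrA [2^-1 * _]mulrC mulNr.
Qed.

End HarmonicConvolution.

Lemma bernoulli_listE m :
  bernoulli_list m = mkseq (fun k => stirling_transform k (@inv_succ rat)) m.+1.
Proof.
elim: m => [|m IHm].
  by rewrite /mkseq /= /stirling_transform big_ord1 /stirling_coef /inv_succ invr1 !mul1r.
rewrite /= IHm [in RHS]mkseqS; congr rcons.
rewrite big_mkcond big_ord_recr /= ltnn addr0.
under eq_bigr => k _ do rewrite ltn_ord nth_mkseq //.
have := sum_binomial_stirling_inv_succ rat m.+2.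
rewrite big_ord_recr big_ord_recr /= binn binSn mul1r !addr0.
rewrite -[X in _ = X]add0r => /addIr /eqP; rewrite addr_eq0 => /eqP ->.
by rewrite opprK mulrC mulKf // pnatr_eq0.
Qed.

Lemma bernoulliE n : bernoulli n = stirling_transform n (@inv_succ rat).
Proof. by rewrite /bernoulli bernoulli_listE nth_mkseq. Qed.

Theorem proposition7 (n : nat) (hn : (0 < n)%N) :
  \sum_(1 <= k < n.+1) \sum_(0 <= j < k)
     ((-1) ^+ (n - j) * ((n - j)`!)%:R * (stirling2 n (n - j))%:R
        / (((n - j + 1)%:R : rat) * (k - j)%:R))
  = - (n%:R / 2) * bernoulli n.-1.
Proof.
rewrite bernoulliE -stirling_transform_harmonic sum_triangle.
transitivity (\sum_(0 <= j < n)
    stirling_coef rat n (n - j) * (harmonic rat (n - j) / (n - j).+1%:R)).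
  apply: eq_big_nat => j /andP [_ lt_j_n].
  rewrite (harmonic_subn _ (ltnW lt_j_n)) mulr_suml mulr_sumr.
  by apply: eq_bigr => k _; rewrite invfM addn1 [X in _ * X]mulrC.
rewrite big_nat_rev big_mkord /stirling_transform big_ord_recl.
rewrite [harmonic _ 0]big_ord0 mul0r mulr0 add0r.
by apply: eq_bigr => i _; rewrite add0n subKn.
Qed.
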